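(* Let $f$ be a critically coalescing quadratic rational map with critical values $v_1,v_2$, and let $k\ge2$. Then for $x\in\hat{\mathbb{C}}$, $x\in\mathcal{V}_f\cup\{f(v_1)\}$ if and only if $f^{-k}(x)\subseteq\mathcal{C}_{f^k}$.
   Context: A quadratic rational map $f$ with critical values $v_1\neq v_2$ is critically coalescing if $f(v_1)=f(v_2)$. $\mathcal{C}_h$, $\mathcal{V}_h$ denote the sets of critical points and critical values of $h$; $f^{-k}(x)$ is the full preimage of $x$ under the $k$-th iterate. *)

From HB Require Import structures.
From mathcomp Require Import all_boot all_order all_algebra.
From mathcomp Require Import reals.
From mathcomp Require Import complex.
Set Implicit Arguments. Unset Strict Implicit. Unset Printing Implicit Defensive.
Import Order.TTheory GRing.Theory Num.Theory.
Local Open Scope ring_scope.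

Section RatMap.
Variable R : realType.
Local Notation C := (R[i]).

(* The Riemann sphere: Some z is z in C, None is infinity. *)
Definition sphere := option C.

(* A rational map is a pair (num, den) representing num/den. *)
Definition ratmap := ({poly C} * {poly C})%type.

Definition rdeg (f : ratmap) : nat := (maxn (size f.1) (size f.2)).-1.

Definition is_ratmap_deg (d : nat) (f : ratmap) : bool :=
  coprimep f.1 f.2 && (rdeg f == d).

Definition quadratic_ratmap (f : ratmap) : bool := is_ratmap_deg 2 f.

Definition reval (f : ratmap) (z : sphere) : sphere :=
  let: (p, q) := f in
  match z with
  | Some a => if q.[a] == 0 then None else Some (p.[a] / q.[a])
  | None =>
      if (size q < size p)%N then None
      else if (size p < size q)%N then Some 0
      else Some (lead_coef p / lead_coef q)
  end.

(* composition f o g of rational maps: homogeneous substitution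
   P(r,s) = sum_i p_i r^i s^(d-i), Q(r,s) = sum_i q_i r^i s^(d-i),
   where d = deg f and g = r/s. *)
Definition hsubst (d : nat) (p r s : {poly C}) : {poly C} :=
  \sum_(i < d.+1) p`_i *: (r ^+ i * s ^+ (d - i)).

Definition rcomp (f g : ratmap) : ratmap :=
  (hsubst (rdeg f) f.1 g.1 g.2, hsubst (rdeg f) f.2 g.1 g.2).

Fixpoint riter (k : nat) (f : ratmap) : ratmap :=
  if k is k'.+1 then rcomp f (riter k' f) else ('X, 1).

(* The homogeneous polynomial whose zeros (on the sphere, counted with
   multiplicity, in degree rdeg f) are the points of f^{-1}(c). *)
Definition fiber_poly (f : ratmap) (c : sphere) : {poly C} :=
  match c with Some c => f.1 - c *: f.2 | None => f.2 end.

(* z is a critical point of f: the local degree of f at z is >= 2, i.e.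
   z is a multiple solution of f(w) = f(z).  At a finite point a this is
   ('X - a)^2 | fiber_poly; at infinity the multiplicity of the root
   [1:0] of the homogenized fiber polynomial is rdeg f - deg(fiber_poly). *)
Definition critical (f : ratmap) (z : sphere) : Prop :=
  match z with
  | Some a => (('X - a%:P) ^+ 2 %| fiber_poly f (reval f z))%R
  | None => ((size (fiber_poly f (reval f z))).+1 <= rdeg f)%N
  end.

Definition critical_value (f : ratmap) (v : sphere) : Prop :=
  exists2 c, critical f c & reval f c = v.

Definition critically_coalescing (f : ratmap) (v1 v2 : sphere) : Prop :=
  quadratic_ratmap f /\ v1 <> v2 /\
  (forall v, critical_value f v <-> v = v1 \/ v = v2) /\
  reval f v1 = reval f v2.

End RatMap.

From HB Require Import structures.
From mathcomp Require Import all_boot all_order all_algebra.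
From mathcomp Require Import reals complex.
From mathcomp Require Import zify ring.
Set Implicit Arguments. Unset Strict Implicit. Unset Printing Implicit Defensive.
Import Order.TTheory GRing.Theory Num.Theory.
Local Open Scope ring_scope.

(* For a rational map g = p/q of degree e whose numerator and denominator
   have no common zero on the sphere, the fiber polynomial of f o g over c is
   the homogeneous substitution of (p, q) into the fiber polynomial of f over
   c.  Over c = f(g(z)) that fiber polynomial of f splits off a linear
   factor vanishing at g(z), whose substitution is the fiber polynomial of g
   over g(z); this gives the chain rule: z is critical for f o g iff z is critical for g or g(z) is
   critical for f.  Hence y is critical for f^k iff some f^j(y), j < k, is
   critical for f.
   For a quadratic map every fiber has at most two points, and a fiber through
   a critical point is reduced to it.  If x = f(c) with c critical, then
   f^(k-1)(y) = c for every y in f^-k(x).  If x = f(v1) = f(v2), then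
   f^(k-1)(y) lies in {v1, v2}, so f^(k-2)(y) is critical.  Otherwise x has
   two preimages, which are not critical values and not both equal to f(v1),
   so x can be pulled back k times avoiding critical points. *)

Section TopCoef.
Variable K : nzRingType.
Implicit Types (p q r h : {poly K}) (e m n : nat).

Lemma size_leq_coef_eq0 h e : (size h <= e.+1)%N -> (size h <= e)%N = (h`_e == 0).
Proof.
move=> hs; case: (leqP (size h) e) => H; first by rewrite nth_default // eqxx.
have -> : e = (size h).-1 by lia.
by rewrite -lead_coefE lead_coef_eq0 -size_poly_eq0; apply/esym/negbTE; lia.
Qed.

Lemma size_mul_leqS p q m n : (size p <= m.+1)%N -> (size q <= n.+1)%N ->
  (size (p * q)%R <= (m + n).+1)%N.
Proof. by move=> hp hq; apply: (leq_trans (size_polyMleq _ _)); lia. Qed.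

Lemma size_exp_leqS r e i : (size r <= e.+1)%N -> (size (r ^+ i) <= (e * i).+1)%N.
Proof.
move=> hr; apply: (leq_trans (size_poly_exp_leq _ _)).
by rewrite ltnS leq_mul2r; apply/orP; right; lia.
Qed.

Lemma coefM_top p q m n : (size p <= m.+1)%N -> (size q <= n.+1)%N ->
  (p * q)`_(m + n) = p`_m * q`_n.
Proof.
move=> hp hq; rewrite coefM.
have hm : (m < (m + n).+1)%N by lia.
rewrite (bigD1 (Ordinal hm)) //= addKn big1 ?addr0 // => j.
rewrite -val_eqE /= => /eqP jm; case: (ltnP m j) => H.
  by rewrite nth_default ?mul0r // (leq_trans hp H).
by rewrite [q`_ _]nth_default ?mulr0 //; apply: (leq_trans hq); have := ltn_ord j; lia.
Qed.

Lemma coef_exp_top r e i : (size r <= e.+1)%N -> (r ^+ i)`_(e * i) = r`_e ^+ i.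
Proof.
move=> hr; elim: i => [|i IH]; first by rewrite !expr0 muln0 coefC.
by rewrite !exprS mulnS coefM_top ?IH ?size_exp_leqS.
Qed.

End TopCoef.

Section Sphere.
Variable R : realType.
Local Notation C := (R[i]).
Local Notation sph := (sphere R).
Implicit Types (p q r s h : {poly C}) (z w b c : sph) (D e n : nat).

(* A polynomial h of size at most e+1 is read as the binary form
   [hform e h x y] of degree e, and z as the point [homx z : homy z]; at
   infinity, evaluation and vanishing refer to the coefficient of degree e. *)
Definition heval e h z : C := match z with Some a => h.[a] | None => h`_e end.

Definition hroot e h z : bool :=
  match z with Some a => root h a | None => (size h <= e)%N end.

Definition hroot2 e h z : bool :=
  match z with
  | Some a => ('X - a%:P) ^+ 2 %| h
  | None => ((size h).+1 <= e)%N
  end.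

Definition hform D h (x y : C) : C := \sum_(i < D.+1) h`_i * x ^+ i * y ^+ (D - i).

Definition homx w : C := if w is Some b then b else 1.
Definition homy w : C := if w is Some _ then 1 else 0.

Definition linfac w : {poly C} := if w is Some b then 'X - b%:P else 1.

Lemma hroot_heval e h z : (size h <= e.+1)%N -> hroot e h z = (heval e h z == 0).
Proof. by case: z => [a|] //= hs; apply: size_leq_coef_eq0. Qed.

Lemma hform_hom D h w : (size h <= D.+1)%N -> (hform D h (homx w) (homy w) == 0) = hroot D h w.
Proof.
move=> hs; case: w => [b|] /=.
  rewrite /root (horner_coef_wide b hs) /hform.
  by congr (_ == 0); apply: eq_bigr => i _; rewrite expr1n mulr1.
rewrite /hform big_ord_recr /= subnn expr0 mulr1 expr1n mulr1 big1 ?add0r.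
  by rewrite size_leq_coef_eq0.
by move=> i _; rewrite expr0n subn_eq0 leqNgt ltn_ord mulr0.
Qed.

Lemma hformZ D h (l x y : C) : hform D h (l * x) (l * y) = l ^+ D * hform D h x y.
Proof.
rewrite /hform mulr_sumr; apply: eq_bigr => i _.
have hi : (i <= D)%N by rewrite -ltnS.
have -> : l ^+ D = l ^+ i * l ^+ (D - i) by rewrite -exprD subnKC.
by rewrite !exprMn; ring.
Qed.

Lemma hsubstB D p q r s : hsubst D (p - q) r s = hsubst D p r s - hsubst D q r s.
Proof. by rewrite /hsubst -sumrB; apply: eq_bigr => i _; rewrite coefB scalerBl. Qed.

Lemma hsubstZ D (a : C) p r s : hsubst D (a *: p) r s = a *: hsubst D p r s.
Proof. by rewrite /hsubst scaler_sumr; apply: eq_bigr => i _; rewrite coefZ scalerA. Qed.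

Lemma hsubst_mulX n h r s : hsubst n.+1 (h * 'X) r s = r * hsubst n h r s.
Proof.
rewrite /hsubst big_ord_recl /= coefMX /= scale0r add0r mulr_sumr.
by apply: eq_bigr => i _; rewrite coefMX /= subSS exprS -scalerAr; congr (_ *: _); ring.
Qed.

Lemma hsubst_lower n h r s : (size h <= n.+1)%N -> hsubst n.+1 h r s = s * hsubst n h r s.
Proof.
move=> hs; rewrite /hsubst big_ord_recr /= nth_default // scale0r addr0 mulr_sumr.
apply: eq_bigr => i _; have hi : (i <= n)%N by rewrite -ltnS.
by rewrite subSn // exprS -scalerAr; congr (_ *: _); ring.
Qed.

Lemma hsubst_linfac n b h r s : (size h <= n.+1)%N ->
  hsubst n.+1 (linfac b * h) r s = fiber_poly (r, s) b * hsubst n h r s.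
Proof.
move=> hs; case: b => [b|] /=; last by rewrite mul1r hsubst_lower.
rewrite mulrBl mul_polyC mulrC hsubstB hsubstZ hsubst_mulX hsubst_lower //.
by rewrite mulrBl scalerAl.
Qed.

Lemma size_hsubst D h r s e : (size r <= e.+1)%N -> (size s <= e.+1)%N ->
  (size (hsubst D h r s) <= (D * e).+1)%N.
Proof.
move=> hr hs; apply: (big_ind (fun p : {poly C} => (size p <= (D * e).+1)%N)).
- by rewrite size_poly0.
- by move=> p q hp hq; apply: (leq_trans (size_polyD _ _)); rewrite geq_max hp hq.
move=> i _; apply: (leq_trans (size_scale_leq _ _)).
have hi : (i <= D)%N by rewrite -ltnS.
have -> : (D * e = e * i + e * (D - i))%N by rewrite -mulnDr subnKC // mulnC.
by apply: size_mul_leqS; apply: size_exp_leqS.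
Qed.

Lemma heval_hsubst D h r s e z : (size r <= e.+1)%N -> (size s <= e.+1)%N ->
  heval (D * e) (hsubst D h r s) z = hform D h (heval e r z) (heval e s z).
Proof.
move=> hr hs; case: z => [a|] /=.
  rewrite /hsubst /hform horner_sum; apply: eq_bigr => i _.
  by rewrite hornerZ hornerM !horner_exp mulrA.
rewrite /hsubst /hform coef_sum; apply: eq_bigr => i _.
have hi : (i <= D)%N by rewrite -ltnS.
have -> : (D * e = e * i + e * (D - i))%N by rewrite -mulnDr subnKC // mulnC.
by rewrite coefZ coefM_top ?size_exp_leqS // !coef_exp_top // mulrA.
Qed.

Lemma size_fiber_poly (g : ratmap R) e c : (size g.1 <= e.+1)%N -> (size g.2 <= e.+1)%N ->
  (size (fiber_poly g c) <= e.+1)%N.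
Proof.
move=> h1 h2; case: c => [c|] //=.
apply: (leq_trans (size_polyD _ _)); rewrite geq_max h1 size_polyN.
exact: leq_trans (size_scale_leq _ _) h2.
Qed.

Lemma fiber_rcomp (f g : ratmap R) c :
  fiber_poly (rcomp f g) c = hsubst (rdeg f) (fiber_poly f c) g.1 g.2.
Proof. by case: c => [c|] //=; rewrite hsubstB hsubstZ. Qed.

Lemma criticalE (g : ratmap R) z : critical g z <-> hroot2 (rdeg g) (fiber_poly g (reval g z)) z.
Proof. by case: z. Qed.

Lemma hroot_factor n h b : (size h <= n.+2)%N -> hroot n.+1 h b ->
  exists2 h1 : {poly C}, (size h1 <= n.+1)%N & h = linfac b * h1.
Proof.
move=> hs; case: b => [b|] /= hb; last by exists h; rewrite ?mul1r.
have [q hq] := factor_theorem _ _ hb; exists q; last by rewrite mulrC.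
have [->|qn] := eqVneq q 0; first by rewrite size_poly0.
by move: hs; rewrite hq size_mul ?polyXsubC_eq0 // size_XsubC; move: (size q) => m; lia.
Qed.

Lemma hroot_exists n h : (size h <= n.+2)%N -> exists w, hroot n.+1 h w.
Proof.
move=> hs; case: (leqP (size h) n.+1) => H; first by exists None.
have /closed_rootP [a ha] : size h != 1%N by lia.
by exists (Some a).
Qed.

Lemma hroot_const h w : (size h <= 1)%N -> h != 0 -> ~~ hroot 0 h w.
Proof.
move=> hs hn; case: w => [a|] /=; last by rewrite size_poly_leq0.
by rewrite (size1_polyC hs) rootC -polyC_eq0 -(size1_polyC hs).
Qed.

Lemma hroot_linfac n b w h : w <> b -> (size h <= n.+1)%N ->
  hroot n.+1 (linfac b * h) w = hroot n h w.
Proof.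
move=> hwb hs; case: b hwb => [b|] /=; last by rewrite mul1r; case: w.
case: w => [a|] hab /=.
  by rewrite rootM root_XsubC; case: eqP => // ab; case: hab; rewrite ab.
have [->|hn] := eqVneq h 0; first by rewrite mulr0 size_poly0.
by rewrite size_mul ?polyXsubC_eq0 // size_XsubC.
Qed.

Lemma hroot2_linfac n b h : (size h <= n.+1)%N -> hroot2 n.+1 (linfac b * h) b = hroot n h b.
Proof.
move=> hs; case: b => [b|] /=; last by rewrite mul1r.
by rewrite expr2 dvdp_mul2l ?polyXsubC_eq0 // dvdp_XsubCl.
Qed.

Lemma hroot2M e D p q z : (1 <= e)%N -> (size p <= e.+1)%N -> (size q <= D.+1)%N ->
  hroot e p z -> hroot2 (e + D) (p * q) z = hroot2 e p z || hroot D q z.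
Proof.
move=> he hp hq; case: z => [a|] /= hz.
  have [p1 ->] := factor_theorem _ _ hz.
  by rewrite expr2 (mulrC p1) -mulrA !dvdp_mul2l ?polyXsubC_eq0 // !dvdp_XsubCl rootM.
have [->|pn] := eqVneq p 0; first by rewrite mul0r size_poly0 he; lia.
have [->|qn] := eqVneq q 0; first by rewrite mulr0 size_poly0 orbT; lia.
rewrite size_mul //; have := size_poly_gt0 p; have := size_poly_gt0 q.
rewrite pn qn; move: (size p) (size q) hp hq hz => x y hp hq hz q0 p0.
by apply/idP/orP; [|case]; lia.
Qed.

(* The last condition says that numerator and denominator have no common
   zero on the sphere. *)
Definition reduced (g : ratmap R) e : Prop :=
  [/\ (1 <= e)%N, (size g.1 <= e.+1)%N, (size g.2 <= e.+1)%N &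
      forall z, heval e g.1 z != 0 \/ heval e g.2 z != 0].

Section Reduced.
Variables (g : ratmap R) (e : nat).
Hypothesis hg : reduced g e.

Lemma reduced_size : size g.1 = e.+1 \/ size g.2 = e.+1.
Proof.
case: hg => _ s1 s2 /(_ None) /=; rewrite -!size_leq_coef_eq0 //.
by case=> H; [left | right]; apply/anti_leq; rewrite ?s1 ?s2 ltnNge.
Qed.

Lemma reduced_rdeg : rdeg g = e.
Proof.
have := reduced_size; case: hg => _ s1 s2 _; rewrite /rdeg.
by case=> ->; [rewrite (maxn_idPl s2) | rewrite (maxn_idPr s1)].
Qed.

Lemma reval_heval z : reval g z =
  if heval e g.2 z == 0 then None else Some (heval e g.1 z / heval e g.2 z).
Proof.
have hs := reduced_size; case: hg => _ s1 s2 _.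
case: g hs s1 s2 => p q /= hs hp hq; case: z => [a|] //=.
have lead_top r : size r = e.+1 -> r`_e = lead_coef r by rewrite lead_coefE => ->.
case: (ltnP (size q) (size p)) => h1.
  have hqe : (size q <= e)%N by move: (size p) (size q) hs hp hq h1 => x y; lia.
  by rewrite nth_default ?eqxx.
case: (ltnP (size p) (size q)) => h2.
  have [hpe hqe] : (size p <= e)%N /\ size q = e.+1.
    by move: (size p) (size q) hs hp hq h1 h2 => x y; lia.
  by rewrite [p`_e]nth_default // mul0r lead_top // lead_coef_eq0 -size_poly_eq0 hqe.
have [hpe hqe] : size p = e.+1 /\ size q = e.+1.
  by move: (size p) (size q) hs hp hq h1 h2 => x y; lia.
by rewrite !lead_top // lead_coef_eq0 -size_poly_eq0 hqe.
Qed.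

Lemma reval_eq_hroot z c : (reval g z == c) = hroot e (fiber_poly g c) z.
Proof.
have [_ s1 s2 /(_ z)] := hg; rewrite hroot_heval ?size_fiber_poly // reval_heval.
have -> : heval e (fiber_poly g c) z =
  if c is Some c then heval e g.1 z - c * heval e g.2 z else heval e g.2 z.
  by case: c => [c|]; case: z => [a|] //=; rewrite ?hornerD ?hornerN ?hornerZ ?coefB ?coefZ.
move: (heval e g.1 z) (heval e g.2 z) => x y.
have [-> [hx|//]|hy _] := eqVneq y 0; case: c => [c|] //=.
- by rewrite mulr0 subr0 (negbTE hx).
- by rewrite !eqxx.
- rewrite subr_eq0; apply/eqP/eqP => [[<-]|->]; [by rewrite divfK | by rewrite mulfK].
- by rewrite (negbTE hy).
Qed.

Lemma reval_homog z : exists2 l : C, l != 0 &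
  heval e g.1 z = l * homx (reval g z) /\ heval e g.2 z = l * homy (reval g z).
Proof.
rewrite reval_heval; have [_ _ _ /(_ z)] := hg.
have [hy [hx|//]|hy _] := eqVneq (heval e g.2 z) 0.
  by exists (heval e g.1 z) => //=; rewrite hy mulr1 mulr0.
by exists (heval e g.2 z) => //=; rewrite mulr1 mulrC divfK.
Qed.

Lemma heval_hsubst_eq0 D h z : (size h <= D.+1)%N ->
  (heval (D * e) (hsubst D h g.1 g.2) z == 0) = hroot D h (reval g z).
Proof.
move=> hs; have [l ln [h1 h2]] := reval_homog z; have [_ s1 s2 _] := hg.
rewrite heval_hsubst // h1 h2 hformZ mulf_eq0 expf_eq0 (negbTE ln) andbF.
exact: hform_hom.
Qed.

End Reduced.

Section Composition.
Variables (f g : ratmap R) (d e : nat).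
Hypotheses (hf : reduced f d) (hg : reduced g e).

Lemma rcomp_reduced : reduced (rcomp f g) (d * e).
Proof.
have [hd s1 s2 nf] := hf; have [he t1 t2 _] := hg.
rewrite /rcomp (reduced_rdeg hf); split => /=; rewrite ?muln_gt0 ?hd ?size_hsubst //.
by move=> z; rewrite !(heval_hsubst_eq0 hg) // !hroot_heval.
Qed.

Lemma reval_rcomp z : reval (rcomp f g) z = reval f (reval g z).
Proof.
have [_ s1 s2 _] := hf; apply/eqP.
rewrite (reval_eq_hroot rcomp_reduced) fiber_rcomp (reduced_rdeg hf).
have [_ t1 t2 _] := hg.
rewrite hroot_heval ?size_hsubst ?size_fiber_poly //.
by rewrite heval_hsubst_eq0 ?size_fiber_poly // -(reval_eq_hroot hf).
Qed.

Lemma critical_rcomp z : critical (rcomp f g) z <-> critical g z \/ critical f (reval g z).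
Proof.
have [hd s1 s2 _] := hf; have [he t1 t2 _] := hg.
rewrite !criticalE (reduced_rdeg rcomp_reduced) reval_rcomp fiber_rcomp.
rewrite (reduced_rdeg hf) (reduced_rdeg hg).
have hw : hroot d (fiber_poly f (reval f (reval g z))) (reval g z).
  by rewrite -(reval_eq_hroot hf).
case: d hd hf s1 s2 hw => // n _ _ s1 s2 hw.
have [h sh ->] := hroot_factor (size_fiber_poly _ s1 s2) hw.
rewrite hsubst_linfac // mulSn hroot2M ?size_fiber_poly ?size_hsubst //;
  last by rewrite -(reval_eq_hroot hg).
rewrite hroot2_linfac // hroot_heval ?size_hsubst // heval_hsubst_eq0 //.
by split => /orP.
Qed.

End Composition.

Lemma id_reduced : reduced ('X, 1) 1.
Proof.
split => //=; rewrite ?size_polyX ?size_poly1 //.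
case=> [a|] /=; first by right; rewrite hornerC oner_eq0.
by left; rewrite coefX oner_eq0.
Qed.

Lemma reval_id z : reval ('X, 1) z = z.
Proof.
case: z => [a|] /=; first by rewrite hornerC oner_eq0 hornerX divr1.
by rewrite size_polyX size_poly1.
Qed.

Lemma not_critical_id z : ~ critical ('X, 1) z.
Proof.
rewrite criticalE (reduced_rdeg id_reduced) reval_id.
have -> : fiber_poly ('X, 1) z = linfac z * 1.
  by case: z => [a|]; rewrite /= mulr1 ?alg_polyC.
by rewrite hroot2_linfac ?size_poly1 //; apply/negP/hroot_const; rewrite ?size_poly1 ?oner_eq0.
Qed.

Lemma riterS k (f : ratmap R) : riter k.+1 f = rcomp f (riter k f).
Proof. by []. Qed.

Section Iterates.
Variables (f : ratmap R) (d : nat).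
Hypothesis hf : reduced f d.

Lemma riter_reduced k : reduced (riter k f) (d ^ k).
Proof.
elim: k => [|k IH]; first exact: id_reduced.
by rewrite expnS; apply: rcomp_reduced.
Qed.

Lemma reval_riter k z : reval (riter k f) z = iter k (reval f) z.
Proof.
elim: k z => [|k IH] z; first exact: reval_id.
by rewrite riterS (reval_rcomp hf (riter_reduced k)) IH.
Qed.

Lemma critical_riter k z :
  critical (riter k f) z <-> exists2 j, (j < k)%N & critical f (iter j (reval f) z).
Proof.
elim: k z => [|k IH] z; first by split => [/not_critical_id|[]].
rewrite riterS (critical_rcomp hf (riter_reduced k)) IH reval_riter; split.
  by case=> [[j hj hc]|hc]; [exists j => //; lia | exists k].
case=> j; rewrite ltnS leq_eqVlt => /orP [/eqP-> hc|hj hc]; [right | left; exists j] => //.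
Qed.

End Iterates.

Lemma quadratic_simple_root h z1 z2 : h != 0 -> (size h <= 3)%N ->
  hroot 2 h z1 -> hroot 2 h z2 -> z1 <> z2 -> ~~ hroot2 2 h z1.
Proof.
move=> hn hs r1 r2 /nesym d21.
have [h1 s1 e1] := @hroot_factor 1 h z1 hs r1; subst h.
rewrite hroot2_linfac //; apply/negP => r11.
have [h2 s2 e2] := @hroot_factor 0 h1 z1 s1 r11; subst h1.
rewrite !hroot_linfac // in r2.
by move: r2; apply/negP/hroot_const => //; apply: contraNneq hn => ->; rewrite !mulr0.
Qed.

Lemma quadratic_two_roots h z1 z2 z3 : h != 0 -> (size h <= 3)%N ->
  hroot 2 h z1 -> hroot 2 h z2 -> hroot 2 h z3 -> z1 <> z2 -> z1 <> z3 -> z2 = z3.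
Proof.
move=> hn hs r1 r2 r3 /nesym d21 /nesym d31.
have [//|/eqP/nesym d32] := eqVneq z2 z3; exfalso.
have [h1 s1 e1] := @hroot_factor 1 h z1 hs r1; subst h.
rewrite hroot_linfac // in r2; rewrite hroot_linfac // in r3.
have [h2 s2 e2] := @hroot_factor 0 h1 z2 s1 r2; subst h1.
rewrite hroot_linfac // in r3.
by move: r3; apply/negP/hroot_const => //; apply: contraNneq hn => ->; rewrite !mulr0.
Qed.

Lemma quadratic_no_double_root h : h != 0 -> (size h <= 3)%N ->
  (forall z, hroot 2 h z -> ~~ hroot2 2 h z) ->
  exists z1, exists2 z2, z1 <> z2 & hroot 2 h z1 /\ hroot 2 h z2.
Proof.
move=> hn hs hnd.
have [z1 r1] := @hroot_exists 1 h hs.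
have [h1 s1 e1] := @hroot_factor 1 h z1 hs r1.
have [z2 r2] := @hroot_exists 0 h1 s1.
have d21 : z2 <> z1.
  by move=> E; subst z2; move: (hnd z1 r1); rewrite e1 hroot2_linfac // r2.
by exists z1; exists z2; [exact: nesym | split; rewrite // e1 hroot_linfac].
Qed.

Section CriticallyCoalescing.
Variables (f : ratmap R) (v1 v2 : sph).
Hypothesis hf : critically_coalescing f v1 v2.

Lemma coalescing_reduced : reduced f 2.
Proof.
have [/andP [cop /eqP]] := hf; rewrite /rdeg => hdeg _.
have hm : maxn (size f.1) (size f.2) = 3%N by move: hdeg; case: maxn => [|[|[|[]]]].
have s1 : (size f.1 <= 3)%N by rewrite -hm leq_maxl.
have s2 : (size f.2 <= 3)%N by rewrite -hm leq_maxr.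
split => // -[a|] /=.
  have [H|] := eqVneq f.1.[a] 0; [right | by left].
  by apply: (coprimep_root cop); rewrite /root H.
rewrite -!size_leq_coef_eq0 //; have [H|H] := leqP (size f.1) (size f.2).
  by right; rewrite -(maxn_idPr H) hm.
by left; rewrite -(maxn_idPl (ltnW H)) hm.
Qed.

Lemma critical_valueP x : critical_value f x <-> x = v1 \/ x = v2.
Proof. by have [_ [_ []]] := hf. Qed.

Lemma critical_value_dec x : critical_value f x \/ ~ critical_value f x.
Proof.
rewrite critical_valueP.
have [->|n1] := eqVneq x v1; first by left; left.
have [->|n2] := eqVneq x v2; first by left; right.
by right; case=> E; [move: n1 | move: n2]; rewrite E eqxx.
Qed.

Lemma fiber_poly_neq0 c : fiber_poly f c != 0.
Proof.
apply/negP => /eqP H.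
have all_c w : reval f w = c.
  apply/eqP; rewrite (reval_eq_hroot coalescing_reduced) H.
  by case: w => [a|] /=; rewrite ?root0 ?size_poly0.
have [c1 _ e1] : critical_value f v1 by apply/critical_valueP; left.
have [c2 _ e2] : critical_value f v2 by apply/critical_valueP; right.
by have [_ [d12 _]] := hf; apply: d12; rewrite -e1 -e2 !all_c.
Qed.

Lemma size_fiber_poly_le3 c : (size (fiber_poly f c) <= 3)%N.
Proof. by have [_ s1 s2 _] := coalescing_reduced; apply: size_fiber_poly. Qed.

Lemma reval_eqP w c : reval f w = c <-> hroot 2 (fiber_poly f c) w.
Proof. by rewrite -(reval_eq_hroot coalescing_reduced); split => [->|/eqP]. Qed.

Lemma critical_hroot2 w : critical f w <-> hroot2 2 (fiber_poly f (reval f w)) w.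
Proof. by rewrite criticalE (reduced_rdeg coalescing_reduced). Qed.

Lemma critical_fiber_eq c w : critical f c -> reval f w = reval f c -> w = c.
Proof.
move=> /critical_hroot2 cc ew; have [//|/eqP nwc] := eqVneq w c.
exfalso; move: cc; apply/negP; apply: (quadratic_simple_root (fiber_poly_neq0 _) (size_fiber_poly_le3 _)
  _ _ (nesym nwc)); exact/reval_eqP.
Qed.

Lemma fiber_le2 w1 w2 w3 : reval f w2 = reval f w1 -> reval f w3 = reval f w1 ->
  w1 <> w2 -> w1 <> w3 -> w2 = w3.
Proof.
move=> e2 e3; apply: (quadratic_two_roots (fiber_poly_neq0 (reval f w1))
  (size_fiber_poly_le3 _)); exact/reval_eqP.
Qed.

Lemma noncritical_value_fiber x : ~ critical_value f x ->
  exists w1, exists2 w2, w1 <> w2 & reval f w1 = x /\ reval f w2 = x.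
Proof.
move=> ncv; have [|w1 [w2 d12 [r1 r2]]] :=
  quadratic_no_double_root (fiber_poly_neq0 x) (size_fiber_poly_le3 x).
  move=> z /reval_eqP ez; apply/negP => hz; apply: ncv; exists z => //.
  by apply/critical_hroot2; rewrite ez.
by exists w1; exists w2 => //; split; apply/reval_eqP.
Qed.

Lemma critical_of_critical_value m x y : critical_value f x ->
  iter m.+2 (reval f) y = x -> critical f (iter m.+1 (reval f) y).
Proof.
move=> [c cc ec] ey; suff -> : iter m.+1 (reval f) y = c by [].
by apply: critical_fiber_eq cc _; rewrite ec.
Qed.

Lemma critical_of_coalesced_value m y :
  iter m.+2 (reval f) y = reval f v1 -> critical f (iter m (reval f) y).
Proof.
set u := iter m (reval f) y => ey.
have [_ [d12 [_ e12]]] := hf.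
have hfu : critical_value f (reval f u).
  apply/critical_valueP; have [->|n1] := eqVneq (reval f u) v1; first by left.
  by right; apply: (fiber_le2 ey (esym e12)) => //; apply/eqP; rewrite eq_sym.
have [c cc ec] := hfu; suff -> : u = c by [].
by apply: critical_fiber_eq cc _; rewrite ec.
Qed.

Lemma noncritical_backward_orbit n x : ~ critical_value f x -> x <> reval f v1 ->
  exists2 y, iter n (reval f) y = x &
    forall j, (j < n)%N -> ~ critical f (iter j (reval f) y).
Proof.
elim: n x => [|n IH] x ncv nx; first by exists x.
have [w1 [w2 d12 [e1 e2]]] := noncritical_value_fiber ncv.
have ncv_pre w : reval f w = x -> ~ critical_value f w.
  move=> ew /critical_valueP vw; apply: nx; rewrite -ew.
  by have [_ [_ [_ e12]]] := hf; case: vw => ->; rewrite ?e12.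
have [w [ew ncw nw]] : exists w, [/\ reval f w = x, ~ critical f w & w <> reval f v1].
  have nc1 : ~ critical f w1.
    by move=> c1; apply/d12/esym/(critical_fiber_eq c1); rewrite e1.
  have nc2 : ~ critical f w2.
    by move=> c2; apply/d12/(critical_fiber_eq c2); rewrite e2.
  have [E|] := eqVneq w1 (reval f v1); last by exists w1; split => //; apply/eqP.
  by exists w2; split => // E2; apply: d12; rewrite E E2.
have [y ey hy] := IH w (ncv_pre w ew) nw.
exists y; first by rewrite iterS ey.
move=> j; rewrite ltnS leq_eqVlt => /orP [/eqP ->|]; [by rewrite ey | exact: hy].
Qed.

End CriticallyCoalescing.

End Sphere.

Theorem mainTheorem9 (R : realType) (f : ratmap R) (v1 v2 : sphere R)
  (hf : critically_coalescing f v1 v2) (k : nat) (hk : (2 <= k)%N)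
  (x : sphere R) :
  (critical_value f x \/ x = reval f v1) <->
  (forall y : sphere R, iter k (reval f) y = x -> critical (riter k f) y).
Proof.
have crit := critical_riter (coalescing_reduced hf).
split.
- have [m ->] : exists m, k = m.+2 by exists k.-2; lia.
  move=> hx y ey; apply/crit.
  case: hx => [hcv | ex]; [exists m.+1 | exists m] => //.
  + exact: (critical_of_critical_value hf hcv ey).
  + exact: (critical_of_coalesced_value hf (etrans ey ex)).
- move=> hy; have [|ncv] := critical_value_dec hf x; first by left.
  have [|nx] := eqVneq x (reval f v1); first by right.
  have [y ey hny] := noncritical_backward_orbit hf k ncv (elimN eqP nx).
  by have [j hj hc] := (crit k y).1 (hy y ey); case: (hny j hj hc).
Qed.
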